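(* For every integer $M\ge0$, the poset $(\mathrm{RL},\le_{RL})$ is noetherian: it contains no infinite antichain.
   Context: Fix an integer $M\ge0$. A reading list of type $(d,n)$ is a tuple $S=(S^1,\dots,S^n)$ of $d$-element subsets of $[Md]=\{1,\dots,Md\}$ (each $S^i$ viewed as an increasing word). $\mathrm{RL}$ denotes the set of all reading lists of all types. For $S=(S^1,\dots,S^n)$ of type $(d,n)$ and $T=(T^1,\dots,T^m)$ of type $(e,m)$, define $S\le_{RL}T$ iff there exist indices $1\le k_1<k_2<\cdots<k_n\le m$ and maps $f_i:S^i\to T^{k_i}$ ($i=1,\dots,n$), each strictly increasing, such that $f_i(x)=f_j(x)$ for all $i,j$ and all $x\in S^i\cap S^j$. An antichain is a sequence of pairwise incomparable elements. *)

From mathcomp Require Import all_boot.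
Set Implicit Arguments. Unset Strict Implicit. Unset Printing Implicit Defensive.

(* A reading list is a finite sequence of words S = [:: S^1; ...; S^n];
   it is a reading list of type (d,n) for the fixed M when every word is a
   d-element subset of [Md] = {1,...,Md}, written as a strictly increasing word. *)
Definition is_RL (M : nat) (S : seq (seq nat)) : Prop :=
  exists d : nat,
    all (fun w => [&& sorted ltn w, size w == d & all (fun x => 0 < x <= M * d) w]) S.

Definition RL_le (S T : seq (seq nat)) : Prop :=
  exists (k : nat -> nat) (f : nat -> nat -> nat),
    [/\ (forall i j, i < j -> j < size S -> k i < k j),
        (forall i, i < size S -> k i < size T),
        (forall i x, i < size S -> x \in nth [::] S i -> f i x \in nth [::] T (k i)),
        (forall i x y, i < size S -> x \in nth [::] S i -> y \in nth [::] S i ->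
            x < y -> f i x < f i y)
      & (forall i j x, i < size S -> j < size S ->
            x \in nth [::] S i -> x \in nth [::] S j -> f i x = f j x)].

Definition RL_infinite_antichain (M : nat) (A : nat -> seq (seq nat)) : Prop :=
  (forall i, is_RL M (A i)) /\
  (forall i j, i <> j -> ~ RL_le (A i) (A j)).

(* Suppose A is an infinite antichain of reading lists.  If infinitely many
   A j have the same length n, read each one column by column: letter p of
   its pattern is the set of rows containing p + 1, a word over the finite
   alphabet of subsets of [n], and Higman's lemma yields two comparable
   lists.  If infinitely many have the same word size d, the sequence of rows
   is itself a word over the subsets of {0, ..., Md}, and Higman's lemma
   applies again.  Otherwise length and word size both tend to infinity, and a greedy
   pigeonhole argument finds in some late A j as many rows as A 0 has, all
   sharing M * d(A 0) letters, onto which A 0 embeds.  Higman's lemma itself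
   is Nash-Williams' minimal bad sequence argument. *)

From Stdlib Require Import Classical ClassicalEpsilon.
From mathcomp Require Import all_boot zify.
Set Implicit Arguments. Unset Strict Implicit. Unset Printing Implicit Defensive.

Definition infinitely_often (P : pred nat) := forall N, exists2 n, N <= n & P n.

Lemma not_infinitely_often (P : pred nat) :
  ~ infinitely_often P -> exists N, forall n, N <= n -> ~~ P n.
Proof.
move=> not_io; apply: NNPP => no_N; apply: not_io => N; apply: NNPP => no_n.
apply: no_N; exists N => n Nn; apply/negP => Pn; apply: no_n; by exists n.
Qed.

Lemma infinitely_often_subsequence (P : pred nat) : infinitely_often P ->
  exists2 phi : nat -> nat, {homo phi : i j / i < j} & forall k, P (phi k).
Proof.
move=> infP.
have exP N : exists n, (N <= n) && P n by have [n Nn Pn] := infP N; exists n; rewrite Nn.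
pose succ N := xchoose (exP N.+1).
have succ_gt N : N < succ N by case/andP: (xchooseP (exP N.+1)).
have succ_P N : P (succ N) by case/andP: (xchooseP (exP N.+1)).
exists (fun k => iter k succ (succ 0)) => [|[|k]] //=.
by apply: homo_ltn => [y x z|i]; [apply: ltn_trans | apply: succ_gt].
Qed.

Lemma finite_infinitely_often (U : finType) (h : nat -> U) :
  exists a, infinitely_often (fun n => h n == a).
Proof.
apply: NNPP => no_a.
have eventually_not a : exists N, forall n, N <= n -> h n != a.
  by apply: not_infinitely_often => io_a; apply: no_a; exists a.
have [N N_h] := fin_all_exists eventually_not.
set n := \max_a N a.
by have /N_h/eqP[] : N (h n) <= n := leq_bigmax (h n).
Qed.

Lemma eventually_geq (f : nat -> nat) :
  (forall n, ~ infinitely_often (fun j => f j == n)) ->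
  forall L, exists N, forall j, N <= j -> L <= f j.
Proof.
move=> f_fin; elim=> [|L [N N_ge]]; first by exists 0.
have [N' N'_neq] := not_infinitely_often (f_fin L).
exists (maxn N N') => j; rewrite geq_max => /andP[/N_ge L_le /N'_neq fj_neq].
by rewrite ltn_neqAle eq_sym fj_neq.
Qed.

Lemma subseq_nth_embedding (T : eqType) (x0 : T) (s t : seq T) : subseq s t ->
  exists2 k : nat -> nat, {homo k : i j / i < j} &
    forall i, i < size s -> k i < size t /\ nth x0 s i = nth x0 t (k i).
Proof.
elim: t s => [|y t IHt] [|x s] //=; try by exists id.
case: eqP => [<-|_] /IHt[k k_inc k_nth].
  exists (fun i => if i is i'.+1 then (k i').+1 else 0).
    by case=> [|i] [|j] //= ij; rewrite ltnS k_inc.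
  by case=> [|i] //= /k_nth[].
exists (fun i => (k i).+1) => [i j ij|i /k_nth[]] //.
by rewrite ltnS k_inc.
Qed.

Section Higman.
Variable T : finType.

Definition bad (f : nat -> seq T) := forall i j, i < j -> ~~ subseq (f i) (f j).

Lemma ex_min_size (Q : seq T -> Prop) : (exists w, Q w) ->
  exists w, Q w /\ forall w', Q w' -> size w <= size w'.
Proof.
move=> [w Qw].
pose P m :=
  if excluded_middle_informative (exists2 w, size w = m & Q w) then true else false.
have exP : exists m, P m.
  by exists (size w); rewrite /P; case: excluded_middle_informative => // -[]; exists w.
case: (ex_minnP exP) => m; rewrite /P.
case: excluded_middle_informative => // -[w' sw' Qw'] _ min_w'.
exists w'; split=> // w'' Qw''; rewrite sw'; apply: min_w'.
by case: excluded_middle_informative => // -[]; exists w''.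
Qed.

Definition bad_prefix (p : seq (seq T)) :=
  exists2 g, bad g & forall i, i < size p -> g i = nth [::] p i.

Lemma bad_prefix_rcons p g : bad g -> (forall i, i < size p -> g i = nth [::] p i) ->
  bad_prefix (rcons p (g (size p))).
Proof.
move=> bad_g gp; exists g => // i.
rewrite size_rcons ltnS nth_rcons leq_eqVlt => /predU1P[->|ip].
  by rewrite ltnn eqxx.
by rewrite ip gp.
Qed.

Definition min_extension (p : seq (seq T)) (w : seq T) :=
  bad_prefix (rcons p w) /\ forall w', bad_prefix (rcons p w') -> size w <= size w'.

Definition min_next (p : seq (seq T)) : seq T :=
  epsilon (inhabits [::]) (min_extension p).

Lemma min_nextP p : bad_prefix p -> min_extension p (min_next p).
Proof.
move=> [g bad_g gp]; apply: epsilon_spec; apply: ex_min_size.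
by exists (g (size p)); apply: bad_prefix_rcons.
Qed.

Fixpoint min_prefix n :=
  if n is m.+1 then rcons (min_prefix m) (min_next (min_prefix m)) else [::].

Lemma size_min_prefix n : size (min_prefix n) = n.
Proof. by elim: n => //= n IHn; rewrite size_rcons IHn. Qed.

Lemma nth_min_prefix n i : i < n -> nth [::] (min_prefix n) i = min_next (min_prefix i).
Proof.
elim: n => // n IHn; rewrite ltnS leq_eqVlt => /predU1P[->|ilt] /=.
  by rewrite nth_rcons size_min_prefix ltnn eqxx.
by rewrite nth_rcons size_min_prefix ilt IHn.
Qed.

Lemma minimal_bad_sequence (f : nat -> seq T) : bad f ->
  exists2 g, bad g & forall n h, bad h -> (forall i, i < n -> h i = g i) ->
    size (g n) <= size (h n).
Proof.
move=> bad_f.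
have prefixP n : bad_prefix (min_prefix n).
  by elim: n => [|n IHn]; [exists f | case: (min_nextP IHn)].
exists (fun n => min_next (min_prefix n)) => [i j ij|n h bad_h hg].
  have [h bad_h hp] := prefixP j.+1.
  rewrite -(nth_min_prefix (leqW ij)) -(nth_min_prefix (ltnSn j)).
  by rewrite -!hp ?size_min_prefix ?(leqW ij) //; apply: bad_h.
apply: (min_nextP (prefixP n)).2; rewrite -{2}(size_min_prefix n).
apply: bad_prefix_rcons => // i; rewrite size_min_prefix => ilt.
by rewrite hg // nth_min_prefix.
Qed.

Theorem higman (f : nat -> seq T) : exists i j, i < j /\ subseq (f i) (f j).
Proof.
apply: NNPP => good_f.
have /minimal_bad_sequence[g bad_g g_min] : bad f.
  by move=> i j ij; apply/negP => fij; apply: good_f; exists i, j.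
have g_nil n : g n != [::].
  by apply: contraNneq (bad_g n n.+1 (ltnSn n)) => ->; apply: sub0seq.
have [a /infinitely_often_subsequence[phi phi_inc phi_a]] :=
  finite_infinitely_often (fun n => ohead (g n)).
have [x g_phi] : exists x, forall k, g (phi k) = x :: behead (g (phi k)).
  case: a phi_a => [x|] phi_a; last by move: (g_nil (phi 0)) (phi_a 0); case: (g _).
  by exists x => k; move: (g_nil (phi k)) (phi_a k); case: (g _) => //= y s _ /eqP[->].
have phi0_le k : phi 0 <= phi k by case: k => // k; apply/ltnW/phi_inc.
(* g' agrees with g below phi 0 and continues with the tails of the g (phi k):
   it is bad, but g' (phi 0) is shorter than g (phi 0). *)
pose g' n := if n < phi 0 then g n else behead (g (phi (n - phi 0))).
suff bad_g' : bad g'.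
  have g'_g i : i < phi 0 -> g' i = g i by rewrite /g' => ->.
  by have := g_min _ _ bad_g' g'_g; rewrite /g' ltnn subnn (g_phi 0) /= ltnn.
move=> i j ij; rewrite /g'; case: (ltnP j (phi 0)) => jlt.
  by rewrite (ltn_trans ij jlt); apply: bad_g.
case: (ltnP i (phi 0)) => ilt.
  apply: contraNN (bad_g i (phi (j - phi 0)) (leq_trans ilt (phi0_le _))).
  by move/subseq_trans; apply; rewrite -drop1 drop_subseq.
have ij' : i - phi 0 < j - phi 0 by lia.
apply: contraNN (bad_g _ _ (phi_inc _ _ ij')).
by rewrite [g (phi (i - _))]g_phi [g (phi (j - _))]g_phi /= eqxx.
Qed.
End Higman.

Lemma sum_count_exchange (I J : Type) (r : seq I) (s : seq J) (P : I -> J -> bool) :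
  \sum_(i <- r) count (P i) s = \sum_(j <- s) count (P^~ j) r.
Proof.
under eq_bigr do rewrite -sum1_count big_mkcond.
under [RHS]eq_bigr do rewrite -sum1_count big_mkcond.
exact: exchange_big.
Qed.

Lemma size_sub_leq_count_iota (w C : seq nat) B : uniq w -> all (gtn B) w ->
  size w - size C <= count (fun x => (x \in w) && (x \notin C)) (index_iota 0 B).
Proof.
move=> w_uniq w_lt.
have C_in_w : count (mem C) w <= size C.
  rewrite -size_filter; apply: uniq_leq_size; first by rewrite filter_uniq.
  by move=> x; rewrite mem_filter => /andP[].
have w_notC : size w - size C <= count (predC (mem C)) w.
  by rewrite -{1}(count_predC (mem C) w) leq_subLR leq_add2r.
apply: leq_trans w_notC _; rewrite -!size_filter; apply: uniq_leq_size.
  by rewrite filter_uniq // iota_uniq.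
move=> x; rewrite !mem_filter mem_index_iota /= => /andP[xC xw]; rewrite xw xC /=.
by move/allP: w_lt => /(_ x xw).
Qed.

Lemma frequent_letter B q (C : seq nat) (ws : seq (seq nat)) :
  0 < B -> 0 < size ws ->
  (forall w, w \in ws -> [/\ uniq w, all (gtn B) w & B <= q * (size w - size C)]) ->
  exists2 x, x \notin C & size ws <= q * count (fun w => x \in w) ws.
Proof.
move=> B_gt0 ws_gt0 ws_ok.
pose frequent x := (x \notin C) && (size ws <= q * count (fun w => x \in w) ws).
have [/hasP[x _ /andP[]]|no_frequent] := boolP (has frequent (index_iota 0 B)).
  by exists x.
pose P x (w : seq nat) := (x \in w) && (x \notin C).
have upper : \sum_(0 <= x < B) q * count (P x) ws <= B * (size ws).-1.
  rewrite -[B in B * _]subn0 -sum_nat_const_nat big_seq [X in _ <= X]big_seq.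
  apply: leq_sum => x x_lt; case xC: (x \in C).
    by rewrite (@eq_count _ _ pred0) ?count_pred0 ?muln0 // => w; rewrite /P xC andbF.
  rewrite -ltnS prednK //; apply: leq_ltn_trans (_ : q * count (fun w => x \in w) ws < _).
    by rewrite leq_mul2l; apply/orP; right; apply: sub_count => w /andP[].
  by move/hasPn: no_frequent => /(_ x x_lt); rewrite /frequent xC ltnNge.
have lower : size ws * B <= \sum_(0 <= x < B) q * count (P x) ws.
  rewrite -big_distrr /= sum_count_exchange big_distrr /= -sum1_size big_distrl /=.
  rewrite big_seq [X in _ <= X]big_seq; apply: leq_sum => w w_in.
  have [w_uniq w_lt B_le] := ws_ok w w_in.
  by rewrite mul1n (leq_trans B_le) // leq_mul2l size_sub_leq_count_iota ?orbT.
have := leq_trans lower upper; rewrite mulnC leq_pmul2l //.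
by rewrite -ltnS prednK // ltnn.
Qed.

Lemma common_letters B q (ws : seq (seq nat)) j n : 0 < B -> 0 < q ->
  (forall w, w \in ws -> [/\ uniq w, all (gtn B) w & B <= q * (size w - j)]) ->
  n * q ^ j <= size ws ->
  exists C ws', [/\ uniq C, size C = j, subseq ws' ws, n <= size ws'
                  & forall w, w \in ws' -> {subset C <= w}].
Proof.
move=> B_gt0 q_gt0; elim: j n => [|j IHj] n ws_ok n_le.
  by exists [::], ws; rewrite expn0 muln1 in n_le.
case: n n_le => [|n] n_le.
  by exists (iota 0 j.+1), [::]; rewrite iota_uniq size_iota sub0seq.
have ws_ok' w : w \in ws -> [/\ uniq w, all (gtn B) w & B <= q * (size w - j)].
  case/ws_ok=> w_uniq w_lt B_le; split=> //.
  by apply: leq_trans B_le _; rewrite leq_mul2l leq_sub2l ?orbT.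
have [|C [ws' [C_uniq C_size ws'_sub ws'_size ws'_C]]] := IHj (n.+1 * q) ws_ok'.
  by rewrite -mulnA -expnS.
have ws'_ok w : w \in ws' -> [/\ uniq w, all (gtn B) w & B <= q * (size w - size C)].
  by rewrite C_size => /(mem_subseq ws'_sub)/ws_ok'.
have [|x xC x_freq] := frequent_letter B_gt0 _ ws'_ok.
  by apply: leq_trans ws'_size; rewrite muln_gt0 q_gt0.
exists (x :: C), [seq w <- ws' | x \in w]; split.
- by rewrite /= xC.
- by rewrite /= C_size.
- exact: subseq_trans (filter_subseq _ _) ws'_sub.
- by rewrite size_filter -(leq_pmul2r q_gt0) (leq_trans ws'_size) // mulnC.
- move=> w; rewrite mem_filter => /andP[xw /ws'_C wC] y.
  by rewrite inE => /predU1P[->|/wC].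
Qed.

Definition rl_dim (S : seq (seq nat)) := size (head [::] S).

Lemma is_RL_mem M S w : is_RL M S -> w \in S ->
  [/\ sorted ltn w, size w = rl_dim S & all (fun x => 0 < x <= M * rl_dim S) w].
Proof.
case=> d /allP S_ok; case: S S_ok => // w0 S S_ok wS.
have: size w0 = d by case/and3P: (S_ok w0 (mem_head _ _)) => _ /eqP.
by rewrite /rl_dim /= => ->; case/and3P: (S_ok w wS) => ? /eqP.
Qed.

Lemma is_RL_letter M S w x : is_RL M S -> w \in S -> x \in w -> 0 < x <= M * rl_dim S.
Proof. by move=> S_RL /(is_RL_mem S_RL)[_ _ /allP]; apply. Qed.

Lemma is_RL_M_gt0 M S : is_RL M S -> 0 < rl_dim S -> 0 < M.
Proof.
rewrite {1}/rl_dim; case: S => [|[|x w] S] //= S_RL _.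
have /andP[x_gt0 x_le] := is_RL_letter S_RL (mem_head _ _) (mem_head x w).
by rewrite lt0n; apply: contraTneq x_le => ->; rewrite mul0n -ltnNge.
Qed.

(* An embedding of patterns is an increasing relabelling of the letters that
   keeps the set of rows containing each letter. *)
Definition pattern M n (S : seq (seq nat)) : seq {set 'I_n} :=
  [seq [set i : 'I_n | p.+1 \in nth [::] S i] | p <- iota 0 (M * rl_dim S)].

Lemma RL_le_of_subseq_pattern M n S T : is_RL M S -> size S = n -> size T = n ->
  subseq (pattern M n S) (pattern M n T) -> RL_le S T.
Proof.
move=> S_RL S_size T_size /(subseq_nth_embedding set0)[k k_inc k_nth].
rewrite !size_map !size_iota in k_nth.
have S_letter i x : i < size S -> x \in nth [::] S i -> 0 < x <= M * rl_dim S.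
  by move=> iS; apply: is_RL_letter S_RL (mem_nth _ iS).
exists id, (fun _ x => (k x.-1).+1); split=> //.
- by move=> i; rewrite S_size T_size.
- move=> i x iS xSi.
  have /andP[x_gt0 x_le] := S_letter i x iS xSi.
  have iS' : i < n by rewrite -S_size.
  have x_lt : x.-1 < M * rl_dim S by lia.
  have [kx_lt] := k_nth _ x_lt; rewrite !(nth_map 0) ?size_iota ?nth_iota //.
  by move=> /setP/(_ (Ordinal iS')); rewrite !inE /= prednK // xSi => <-.
- move=> i x y iS xSi ySi xy.
  have := S_letter i x iS xSi; have := S_letter i y iS ySi.
  by move=> ? ?; rewrite ltnS; apply: k_inc; lia.
Qed.

Definition rows K (S : seq (seq nat)) : seq {set 'I_K} :=
  [seq [set x : 'I_K | val x \in w] | w <- S].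

Lemma RL_le_of_subseq_rows M K S T : is_RL M S -> M * rl_dim S < K ->
  subseq (rows K S) (rows K T) -> RL_le S T.
Proof.
move=> S_RL K_gt /(subseq_nth_embedding set0)[k k_inc k_nth].
rewrite !size_map in k_nth.
exists k, (fun _ x => x); split=> //.
- by move=> i j ij _; apply: k_inc.
- by move=> i iS; case: (k_nth i iS).
- move=> i x iS xSi; have [kiT] := k_nth i iS; rewrite !(nth_map [::]) //.
  have xK : x < K by have := is_RL_letter S_RL (mem_nth _ iS) xSi; lia.
  by move=> /setP/(_ (Ordinal xK)); rewrite !inE /= xSi => <-.
Qed.

Lemma RL_le_of_large M S T : is_RL M S -> is_RL M T ->
  2 * (M * rl_dim S) < rl_dim T ->
  size S * (4 * M) ^ (M * rl_dim S) <= size T -> RL_le S T.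
Proof.
move=> S_RL T_RL dim_gt size_ge.
have M_gt0 : 0 < M by apply: is_RL_M_gt0 T_RL _; lia.
set K := M * rl_dim S in dim_gt size_ge; set e := rl_dim T in dim_gt.
(* As e > 2K, a word of T has at least (e + 1) / 2 letters outside any K
   letters, a fraction at least 1 / (4M) of the alphabet [1, Me]. *)
have T_ok w : w \in T ->
    [/\ uniq w, all (gtn (M * e).+1) w & (M * e).+1 <= 4 * M * (size w - K)].
  move=> wT; have [w_sorted -> /allP w_letters] := is_RL_mem T_RL wT; split.
  - by move: w_sorted; rewrite ltn_sorted_uniq_leq => /andP[].
  - by apply/allP => x /w_letters /andP[_]; rewrite /= ltnS.
  - have : e.+1 <= 2 * (e - K) by lia.
    by nia.
have [|C [ws [C_uniq C_size ws_sub ws_size ws_C]]] :=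
  common_letters (ltn0Sn _) _ T_ok size_ge.
  by rewrite muln_gt0.
have [k k_inc k_nth] := subseq_nth_embedding [::] ws_sub.
set Cs := sort leq C.
have Cs_sorted : sorted ltn Cs.
  by rewrite ltn_sorted_uniq_leq sort_uniq C_uniq sort_sorted //; apply: leq_total.
have Cs_size : size Cs = K by rewrite size_sort.
have S_letter i x : i < size S -> x \in nth [::] S i -> 0 < x <= K.
  by move=> iS; apply: is_RL_letter S_RL (mem_nth _ iS).
have iws i : i < size S -> i < size ws by move=> iS; apply: leq_trans ws_size.
exists k, (fun _ x => nth 0 Cs x.-1); split=> //.
- by move=> i j ij _; apply: k_inc.
- by move=> i /iws iS; case: (k_nth i iS).
- move=> i x iS xSi; have [_ <-] := k_nth i (iws i iS).
  apply: ws_C; first exact/mem_nth/iws.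
  rewrite -(mem_sort leq); apply: mem_nth; rewrite Cs_size.
  by have := S_letter i x iS xSi; lia.
- move=> i x y iS xSi ySi xy.
  have := S_letter i x iS xSi; have := S_letter i y iS ySi => ? ?.
  by apply: (sorted_ltn_nth ltn_trans 0 Cs_sorted); rewrite ?inE ?Cs_size; lia.
Qed.

Lemma antichain_not_infinitely_often (U : finType) M A
    (code : seq (seq nat) -> seq U) (P : pred nat) : RL_infinite_antichain M A ->
  (forall i j, P i -> P j -> subseq (code (A i)) (code (A j)) -> RL_le (A i) (A j)) ->
  ~ infinitely_often P.
Proof.
move=> [_ anti] code_le /infinitely_often_subsequence[phi phi_inc phi_P].
have [i [j [ij sub]]] := higman (fun k => code (A (phi k))).
apply: (anti (phi i) (phi j)); last exact: code_le.
by move/eqP; rewrite ltn_eqF // phi_inc.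
Qed.

Lemma antichain_size_finitely_often M A : RL_infinite_antichain M A ->
  forall n, ~ infinitely_often (fun j => size (A j) == n).
Proof.
move=> anti n; apply: (antichain_not_infinitely_often (code := pattern M n) anti).
move=> i j /eqP Ai_size /eqP Aj_size.
exact: RL_le_of_subseq_pattern (anti.1 i) Ai_size Aj_size.
Qed.

Lemma antichain_dim_finitely_often M A : RL_infinite_antichain M A ->
  forall d, ~ infinitely_often (fun j => rl_dim (A j) == d).
Proof.
move=> anti d; apply: (antichain_not_infinitely_often (code := rows (M * d).+1) anti).
by move=> i j /eqP Ai_dim _; apply: RL_le_of_subseq_rows (anti.1 i) _; rewrite Ai_dim.
Qed.

Theorem mainTheorem7 (M : nat) :
  ~ exists A : nat -> seq (seq nat), RL_infinite_antichain M A.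
Proof.
move=> [A anti]; have [A_RL A_incomparable] := anti.
set K := M * rl_dim (A 0).
have [N1 N1_size] := eventually_geq (antichain_size_finitely_often anti)
  (size (A 0) * (4 * M) ^ K).
have [N2 N2_dim] := eventually_geq (antichain_dim_finitely_often anti) (2 * K).+1.
pose j := (maxn N1 N2).+1.
apply: (A_incomparable 0 j) => //; apply: RL_le_of_large (A_RL 0) (A_RL j) _ _.
- by apply: N2_dim; rewrite /j; lia.
- by apply: N1_size; rewrite /j; lia.
Qed.
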